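(* Let $n\ge 2$, $d\ge 3$ be integers and suppose there is a proper real algebraic subvariety $\Psi\subset\mathrm{Sym}(n,d)$ such that every $\mathcal{T}\in\mathrm{Sym}(n,d)\setminus\Psi$ has a unique best rank one approximation, and this approximation is symmetric. Then every $\mathcal{T}\in\mathrm{Sym}(n,d)$ has a symmetric best rank one approximation.
   Context: $\mathrm{Sym}(n,d)$ is the space of real tensors $[t_{i_1,\ldots,i_d}]_{i_1,\ldots,i_d=1}^n$ invariant under all permutations of indices. Norm $\|\mathcal{T}\|=\sqrt{\sum t_{i_1,\ldots,i_d}^2}$; $\mathrm{S}^{n-1}$ is the Euclidean unit sphere in $\mathbb{R}^n$. A best rank one approximation of $\mathcal{T}$ is a tensor $a\,\mathbf{u}_1\otimes\cdots\otimes\mathbf{u}_d$ ($a\in\mathbb{R}$, $\mathbf{u}_j\in\mathrm{S}^{n-1}$) minimizing $\|\mathcal{T}-s\,\mathbf{x}_1\otimes\cdots\otimes\mathbf{x}_d\|$ over $s\in\mathbb{R}$, $\mathbf{x}_j\in\mathrm{S}^{n-1}$; it is symmetric if it is a symmetric tensor, i.e. of the form $b\,\mathbf{u}\otimes\cdots\otimes\mathbf{u}$. *)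

From HB Require Import structures.
From mathcomp Require Import all_boot all_order all_algebra all_fingroup.
From mathcomp Require Import reals.
From mathcomp Require Import mpoly.
Set Implicit Arguments. Unset Strict Implicit. Unset Printing Implicit Defensive.
Import Order.TTheory GRing.Theory Num.Theory.
Local Open Scope ring_scope.

Definition tensor (R : realType) (n d : nat) := {ffun d.-tuple 'I_n -> R}.

Definition is_symtensor (R : realType) (n d : nat) (T : tensor R n d) : Prop :=
  forall (s : 'S_d) (idx : d.-tuple 'I_n),
    T [tuple tnth idx (s i) | i < d] = T idx.

Definition tnorm (R : realType) (n d : nat) (T : tensor R n d) : R :=
  Num.sqrt (\sum_(idx : d.-tuple 'I_n) T idx ^+ 2).

Definition on_sphere (R : realType) (n : nat) (u : 'rV[R]_n) : Prop :=
  \sum_(i < n) u 0 i ^+ 2 = 1.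

Definition rank1 (R : realType) (n d : nat) (s : R) (xs : d.-tuple 'rV[R]_n)
  : tensor R n d :=
  [ffun idx : d.-tuple 'I_n => s * \prod_(j < d) (tnth xs j) 0 (tnth idx j)].

Definition best_rank1_approx (R : realType) (n d : nat) (T A : tensor R n d)
  : Prop :=
  (exists (a : R) (us : d.-tuple 'rV[R]_n),
      (forall j, on_sphere (tnth us j)) /\ A = rank1 a us) /\
  (forall (s : R) (xs : d.-tuple 'rV[R]_n),
      (forall j, on_sphere (tnth xs j)) ->
      tnorm (T - A) <= tnorm (T - rank1 s xs)).

Definition tcoords (R : realType) (n d : nat) (T : tensor R n d)
  : 'I_#|{: d.-tuple 'I_n}| -> R :=
  fun i => T (enum_val i).

(* The real algebraic subvariety of Sym(n,d) cut out by a family P of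
   polynomials in the entries of the tensor. *)
Definition zero_locus_sym (R : realType) (n d : nat)
  (P : {mpoly R[#|{: d.-tuple 'I_n}|]} -> Prop) (T : tensor R n d) : Prop :=
  is_symtensor T /\ forall p, P p -> p.@[tcoords T] = 0.

From mathcomp Require Import all_boot all_order all_algebra all_fingroup.
From mathcomp Require Import reals.
From mathcomp Require Import mpoly.
From mathcomp Require Import all_classical all_reals all_analysis.
From mathcomp Require Import ring lra.
Import Order.TTheory GRing.Theory Num.Theory.
Import numFieldNormedType.Exports.
Local Open Scope ring_scope.

(** By compactness of [[-M, M] x S^{n-1}] some [b u^{(x)d}] is closest to [T]
   among symmetric rank one tensors. Symmetric tensors outside [Psi] are dense
   in Sym(n,d): a polynomial that is nonzero at [T0] does not vanish
   identically on the segment from [T] to [T0]. For such a [T'] near [T] the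
   best rank one approximation is symmetric, hence of the form [b' u'^{(x)d}],
   so by the triangle inequality no rank one tensor beats [b u^{(x)d}] by more
   than [2 ||T - T'||]. *)

Lemma cauchy_schwarz_sum (R : realFieldType) (I : finType) (x y : I -> R) :
  (\sum_i x i * y i) ^+ 2 <= (\sum_i x i ^+ 2) * (\sum_i y i ^+ 2).
Proof.
set A := \sum_i \sum_j x i ^+ 2 * y j ^+ 2.
set B := \sum_i \sum_j (x i * y i) * (x j * y j).
have -> : (\sum_i x i ^+ 2) * (\sum_i y i ^+ 2) = A.
  by rewrite big_distrl /=; apply: eq_bigr => i _; rewrite big_distrr.
have -> : (\sum_i x i * y i) ^+ 2 = B.
  by rewrite expr2 big_distrl /=; apply: eq_bigr => i _; rewrite big_distrr.
have lagrange : \sum_i \sum_j (x i * y j - x j * y i) ^+ 2 = 2 * (A - B).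
  have -> : 2 * (A - B) = (A - B) + (\sum_i \sum_j x j ^+ 2 * y i ^+ 2 - B).
    by rewrite [X in _ + (X - _)]exchange_big -/A; ring.
  rewrite /A /B -!sumrB -big_split /=; apply: eq_bigr => i _.
  rewrite -!sumrB -big_split /=; apply: eq_bigr => j _; ring.
have : 0 <= \sum_i \sum_j (x i * y j - x j * y i) ^+ 2.
  by apply: sumr_ge0 => i _; apply: sumr_ge0 => j _; exact: sqr_ge0.
rewrite lagrange; lra.
Qed.

Lemma minkowski_sum (R : rcfType) (I : finType) (x y : I -> R) :
  Num.sqrt (\sum_i (x i + y i) ^+ 2) <=
  Num.sqrt (\sum_i x i ^+ 2) + Num.sqrt (\sum_i y i ^+ 2).
Proof.
set A := \sum_i x i ^+ 2; set B := \sum_i y i ^+ 2.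
have A0 : 0 <= A by apply: sumr_ge0 => i _; exact: sqr_ge0.
have B0 : 0 <= B by apply: sumr_ge0 => i _; exact: sqr_ge0.
rewrite -[leRHS]ger0_norm ?addr_ge0 ?sqrtr_ge0 // -sqrtr_sqr ler_sqrt ?sqr_ge0 //.
have -> : \sum_i (x i + y i) ^+ 2 = A + 2 * \sum_i x i * y i + B.
  rewrite /A /B mulr_sumr -!big_split /=; apply: eq_bigr => i _; ring.
have -> : (Num.sqrt A + Num.sqrt B) ^+ 2 = A + 2 * (Num.sqrt (A * B)) + B.
  by rewrite sqrrD !sqr_sqrtr // sqrtrM // -mulr_natl; ring.
suff : \sum_i x i * y i <= Num.sqrt (A * B) by lra.
rewrite (le_trans (ler_norm _)) // -sqrtr_sqr ler_sqrt ?mulr_ge0 //.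
exact: cauchy_schwarz_sum.
Qed.

Section TensorNorm.
Context {R : realType} {n d : nat}.
Implicit Types X Y Z : tensor R n d.

Lemma tnorm_ge0 X : 0 <= tnorm X.
Proof. exact: sqrtr_ge0. Qed.

Lemma tnormN X : tnorm (- X) = tnorm X.
Proof. by congr Num.sqrt; apply: eq_bigr => i _; rewrite ffunE sqrrN. Qed.

Lemma tnorm_distC X Y : tnorm (X - Y) = tnorm (Y - X).
Proof. by rewrite -tnormN opprB. Qed.

Lemma tnormZ (t : R) X : tnorm (t *: X) = `|t| * tnorm X.
Proof.
rewrite /tnorm -sqrtr_sqr -sqrtrM ?sqr_ge0 // mulr_sumr.
by congr Num.sqrt; apply: eq_bigr => i _; rewrite ffunE exprMn.
Qed.

Lemma ler_tnormD X Y : tnorm (X + Y) <= tnorm X + tnorm Y.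
Proof.
rewrite /tnorm (eq_bigr (fun i => (X i + Y i) ^+ 2)) => [|i _]; last by rewrite ffunE.
exact: minkowski_sum.
Qed.

Lemma ler_tnorm_distD X Y Z : tnorm (X - Z) <= tnorm (X - Y) + tnorm (Y - Z).
Proof. by rewrite -[X - Z](subrKA Y) ler_tnormD. Qed.

End TensorNorm.

Definition tpow (R : realType) (n d : nat) (b : R) (u : 'rV[R]_n) : tensor R n d :=
  rank1 b [tuple of nseq d u].
Arguments tpow {R n} d b u.

Lemma tpow_sym {R : realType} {n d : nat} (b : R) (u : 'rV[R]_n) :
  is_symtensor (tpow d b u).
Proof.
move=> s idx; rewrite !ffunE; congr (_ * _).
under eq_bigr do rewrite tnth_nseq tnth_mktuple.
under [RHS]eq_bigr do rewrite tnth_nseq.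
by rewrite [RHS](reindex_inj (@perm_inj _ s)).
Qed.

Lemma tpow0 {R : realType} {n d : nat} (u : 'rV[R]_n) : tpow d 0 u = 0.
Proof. by apply/ffunP => idx; rewrite !ffunE mul0r. Qed.

Lemma sum_tuple_prod (R : comRingType) (n d : nat) (f : 'I_n -> R) :
  \sum_(idx : d.-tuple 'I_n) \prod_(j < d) f (tnth idx j) = (\sum_i f i) ^+ d.
Proof.
rewrite -[in RHS](card_ord d) -prodr_const bigA_distr_bigA /=.
rewrite (reindex (fun t : d.-tuple 'I_n => [ffun j => tnth t j])) /=.
  by apply: eq_bigr => t _; apply: eq_bigr => j _; rewrite ffunE.
exists (fun g : {ffun 'I_d -> 'I_n} => [tuple g j | j < d]) => [t _|g _].
  by apply: eq_from_tnth => j; rewrite tnth_mktuple ffunE.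
by apply/ffunP => j; rewrite ffunE tnth_mktuple.
Qed.

Lemma tnorm_tpow {R : realType} {n d : nat} (b : R) (u : 'rV[R]_n) :
  on_sphere u -> tnorm (tpow d b u) = `|b|.
Proof.
move=> u_sphere; rewrite /tnorm -sqrtr_sqr; congr Num.sqrt.
under eq_bigr do rewrite ffunE exprMn -prodrXl.
under eq_bigr do under eq_bigr do rewrite tnth_nseq.
by rewrite -mulr_sumr (@sum_tuple_prod _ _ d (fun i => u 0 i ^+ 2)) u_sphere expr1n mulr1.
Qed.

Lemma on_sphere_neq0 {R : realType} {n : nat} (u : 'rV[R]_n) :
  on_sphere u -> exists i, u 0 i != 0.
Proof.
move=> u_sphere; apply/existsP; apply: contraPT u_sphere => /existsPn u0.
rewrite /on_sphere big1 => [|i _]; last by rewrite (eqP (negbNE (u0 i))) expr0n.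
by move/eqP; rewrite eq_sym oner_eq0.
Qed.

Lemma prodrD2 (R : comRingType) (I : finType) (j k : I) (F : I -> R) :
  k != j -> \prod_i F i = F j * F k * \prod_(i | (i != j) && (i != k)) F i.
Proof. by move=> kj; rewrite (bigD1 j) // (bigD1 k) //= mulrA. Qed.
Arguments prodrD2 {R I j k F}.

Section SymmetricRankOne.
Variables (R : realType) (n d : nat) (a : R) (us : d.-tuple 'rV[R]_n).
Hypotheses (a_neq0 : a != 0) (us_neq0 : forall j, exists i, tnth us j 0 i != 0).
Hypothesis rank1_sym : is_symtensor (rank1 a us).

Let supp j : 'I_n := xchoose (us_neq0 j).
Let supp_neq0 j : tnth us j 0 (supp j) != 0 := xchooseP (us_neq0 j).

(* Compare the entries of [rank1 a us] at a multi-index with [p], [q] in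
   positions [j], [k] and nonzero factors elsewhere, and at its transpose. *)
Lemma rank1_sym_factors_proportional j k p q :
  tnth us j 0 p * tnth us k 0 q = tnth us j 0 q * tnth us k 0 p.
Proof.
have [<-|kj] := eqVneq k j; first exact: mulrC.
pose idx := [tuple if m == j then p else if m == k then q else supp m | m < d].
have := rank1_sym (tperm j k) idx; rewrite !ffunE !(prodrD2 kj).
rewrite !tnth_mktuple tpermL tpermR eqxx (negbTE kj) eqxx.
set C := \prod_(m < d | (m != j) && (m != k)) tnth us m 0 (supp m).
have idx_off m : m != j -> m != k -> tnth idx m = supp m.
  by move=> mj mk; rewrite tnth_mktuple (negbTE mj) (negbTE mk).
have -> : \prod_(m | (m != j) && (m != k)) tnth us m 0 (tnth idx m) = C.
  by apply: eq_bigr => m /andP[mj mk]; rewrite idx_off.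
have -> : \prod_(m | (m != j) && (m != k))
    tnth us m 0 (tnth [tuple tnth idx (tperm j k i) | i < d] m) = C.
  apply: eq_bigr => m /andP[mj mk].
  by rewrite tnth_mktuple tpermD 1?eq_sym // idx_off.
have C_neq0 : C != 0 by apply/prodf_neq0 => m _; exact: supp_neq0.
by move/(mulfI a_neq0)/(mulIf C_neq0).
Qed.

Lemma sym_rank1_eq_tpow_neq0 j0 : exists b, rank1 a us = tpow d b (tnth us j0).
Proof.
set x := tnth us j0; set p := supp j0.
pose c j := tnth us j 0 p / x 0 p.
have factorE j q : tnth us j 0 q = c j * x 0 q.
  by rewrite /c mulrAC rank1_sym_factors_proportional mulfK ?supp_neq0.
exists (a * \prod_j c j); apply/ffunP => idx; rewrite !ffunE -mulrA -big_split.
by congr (_ * _); apply: eq_bigr => j _; rewrite factorE tnth_nseq.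
Qed.

End SymmetricRankOne.

Lemma sym_rank1_eq_tpow {R : realType} {n d : nat} {a : R} {us : d.-tuple 'rV[R]_n}
    (j0 : 'I_d) :
  (forall j, on_sphere (tnth us j)) -> is_symtensor (rank1 a us) ->
  exists b, rank1 a us = tpow d b (tnth us j0).
Proof.
move=> us_sphere; have [->|a_neq0] := eqVneq a 0.
  by exists 0; apply/ffunP => idx; rewrite !ffunE !mul0r.
move=> rank1_sym; apply: sym_rank1_eq_tpow_neq0 => // j.
exact: on_sphere_neq0.
Qed.

Lemma poly_nonroot_small {R : numFieldType} {Q : {poly R}} {e : R} :
  Q != 0 -> 0 < e -> exists t, 0 < t <= e /\ ~~ root Q t.
Proof.
move=> Q_neq0 e_gt0; pose ts := [seq e / k.+1%:R | k <- iota 0 (size Q)].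
have ts_uniq : uniq ts.
  rewrite map_inj_uniq ?iota_uniq // => k1 k2 /(mulfI (lt0r_neq0 e_gt0)) /invr_inj.
  by move/eqP; rewrite eqr_nat => /eqP [].
have : ~~ all (root Q) ts.
  by apply/negP => /(max_poly_roots Q_neq0) /(_ ts_uniq); rewrite size_map size_iota ltnn.
case/allPn => _ /mapP [k _ ->] nonroot; exists (e / k.+1%:R); split => //.
by rewrite divr_gt0 //= ler_pdivrMr // ler_peMr ?(ltW e_gt0) // ler1n.
Qed.

Lemma meval_line {R : comRingType} {k : nat} (p : {mpoly R[k]}) (a b : 'I_k -> R) :
  exists Q : {poly R}, forall t, Q.[t] = p.@[fun i => a i + t * b i].
Proof.
exists (\sum_(m <- msupp p) p@_m *: \prod_i ((a i)%:P + b i *: 'X) ^+ m i) => t.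
rewrite mevalE horner_sum; apply: eq_bigr => m _.
rewrite hornerZ horner_prod; congr (_ * _); apply: eq_bigr => i _.
by rewrite horner_exp hornerD hornerC hornerZ hornerX mulrC.
Qed.

Lemma sym_not_zero_locus_dense {R : realType} {n d : nat}
    {P : {mpoly R[#|{: d.-tuple 'I_n}|]} -> Prop} {T0 T : tensor R n d} :
  is_symtensor T0 -> ~ zero_locus_sym P T0 -> is_symtensor T ->
  forall e : R, 0 < e -> exists T' : tensor R n d,
    [/\ is_symtensor T', ~ zero_locus_sym P T' & tnorm (T - T') < e].
Proof.
move=> T0_sym T0_notin T_sym e e_gt0.
have [p Pp pT0_neq0] : exists2 p, P p & p.@[tcoords T0] != 0.
  apply: contrapT => none; apply: T0_notin; split => // p Pp.
  by apply: contrapT => pT0; apply: none; exists p => //; apply/eqP.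
pose L t := T + t *: (T0 - T).
have [Q QE] := meval_line p (tcoords T) (tcoords (T0 - T)).
have pLE t : p.@[tcoords (L t)] = Q.[t].
  by rewrite QE; congr meval; apply/funext => i; rewrite /tcoords !ffunE.
have Q_neq0 : Q != 0.
  apply: contra_neq pT0_neq0 => Q0.
  by rewrite -[T0](addrNK T) addrC -[T0 - T]scale1r -/(L 1) pLE Q0 horner0.
set N := tnorm (T0 - T).
have N_ge0 : 0 <= N := tnorm_ge0 _.
have e'_gt0 : 0 < e / (N + 1) by rewrite divr_gt0 // ltr_wpDl.
have [t [/andP [t_gt0 t_le] Qt_neq0]] := poly_nonroot_small Q_neq0 e'_gt0.
exists (L t); split.
- by move=> s idx; rewrite !ffunE T_sym T0_sym.
- by case=> _ /(_ p Pp); rewrite pLE; apply/eqP.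
rewrite /L opprD addNKr tnormN tnormZ gtr0_norm // -/N.
apply: le_lt_trans (ler_wpM2r N_ge0 t_le) _.
by rewrite mulrAC ltr_pdivrMr ?ltr_wpDl // ltr_pM2l // ltrDl.
Qed.

Local Open Scope classical_set_scope.

Lemma sphere_compact (R : realType) (n : nat) : compact [set u : 'rV[R]_n | on_sphere u].
Proof.
have sqnorm_cont : continuous (fun u : 'rV[R]_n => \sum_i u 0 i ^+ 2).
  apply: (continuous_big add_continuous) => i _ u.
  apply: (@continuous_comp _ _ _ (fun u : 'rV[R]_n => u 0 i) (fun x => x ^+ 2)).
    exact: coord_continuous.
  exact: exprn_continuous.
apply: (subclosed_compact _ (rV_compact (fun=> @segment_compact R (-1) 1))).
  exact: (proj1 (continuous_closedP _) sqnorm_cont _ (@closed_eq R 1)).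
move=> u u_sphere i /=; rewrite in_itv /= -ler_norml -(expr_le1 (n := 2)) //.
rewrite real_normK ?num_real // -u_sphere (bigD1 i) //= lerDl.
by apply: sumr_ge0 => j _; exact: sqr_ge0.
Qed.

Lemma continuous_tnorm_sub_tpow {R : realType} {n d : nat} (T : tensor R n d) :
  continuous (fun bu : R * 'rV[R]_n => tnorm (T - tpow d bu.1 bu.2)).
Proof.
pose entry idx (bu : R * 'rV[R]_n) := T idx - bu.1 * \prod_(j < d) bu.2 0 (tnth idx j).
have -> : (fun bu => tnorm (T - tpow d bu.1 bu.2)) =
    (fun bu => Num.sqrt (\sum_idx entry idx bu ^+ 2)).
  apply/funext => bu; congr Num.sqrt; apply: eq_bigr => idx _; rewrite !ffunE.
  by congr ((_ - _ * _) ^+ 2); apply: eq_bigr => j _; rewrite tnth_nseq.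
have coord_cont k : continuous (fun bu : R * 'rV[R]_n => bu.2 0 k).
  move=> bu; apply: (@continuous_comp _ _ _ snd (fun u : 'rV[R]_n => u 0 k)).
    exact: cvg_snd.
  exact: coord_continuous.
have entry_cont idx : continuous (entry idx).
  move=> bu; apply: (@continuousB R R _ (fun=> T idx)
    (fun bu : R * 'rV[R]_n => bu.1 * \prod_(j < d) bu.2 0 (tnth idx j))).
    exact: cst_continuous.
  apply: continuousM; first exact: cvg_fst.
  by apply: (continuous_big mul_continuous) => j _; exact: coord_cont.
move=> bu; apply: (continuous_comp _ (@sqrt_continuous R _)).
apply: (continuous_big add_continuous) => idx _ {}bu.
apply: (@continuous_comp _ _ _ (entry idx) (fun x => x ^+ 2)).
  exact: entry_cont.
exact: exprn_continuous.
Qed.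

Lemma exists_sphere_point (R : realType) (n : nat) : (0 < n)%N ->
  exists u : 'rV[R]_n, on_sphere u.
Proof.
move=> n_gt0; pose i0 := Ordinal n_gt0; exists (delta_mx 0 i0).
rewrite /on_sphere (bigD1 i0) //= big1 => [|i i_neq0]; rewrite mxE.
  by rewrite !eqxx expr1n addr0.
by rewrite (negbTE i_neq0) andbF expr0n.
Qed.

Lemma exists_best_tpow {R : realType} {n d : nat} (T : tensor R n d) : (0 < n)%N ->
  exists b u, on_sphere u /\ forall b' u', on_sphere u' ->
    tnorm (T - tpow d b u) <= tnorm (T - tpow d b' u').
Proof.
(* Beyond [|b'| > 2 ||T||] the error exceeds [||T||], that of the zero tensor. *)
move=> n_gt0; set M := 2 * tnorm T.
have M_ge0 : 0 <= M by rewrite mulr_ge0 ?tnorm_ge0.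
pose K := `[-M, M] `*` [set u : 'rV[R]_n | on_sphere u].
have [e e_sphere] := exists_sphere_point R n n_gt0.
have K0e : K (0, e) by split => //=; rewrite in_itv /= oppr_le0 M_ge0.
have [[b u] /set_mem [_ u_sphere] bu_min] := compact_EVT_min (ex_intro _ _ K0e)
  (compact_setX (@segment_compact R _ _) (sphere_compact R n))
  (continuous_subspaceT (continuous_tnorm_sub_tpow T)).
exists b, u; split=> // b' u' u'_sphere.
have [b'_le|b'_gt] := leP `|b'| M.
  by apply: (bu_min (b', u')); rewrite inE; split => //=; rewrite in_itv /= -ler_norml.
have le_T : tnorm (T - tpow d b u) <= tnorm T.
  by have := bu_min (0, e); rewrite /= tpow0 subr0; apply; rewrite inE.
have := ler_tnorm_distD 0 T (tpow d b' u').
rewrite !sub0r !tnormN tnorm_tpow // => b'_le.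
rewrite /M in b'_gt; lra.
Qed.

Lemma best_rank1_approx_perturb {R : realType} {n d : nat} (T : tensor R n d) (s : R)
    {T' A : tensor R n d} {xs : d.-tuple 'rV[R]_n} :
  best_rank1_approx T' A -> (forall j, on_sphere (tnth xs j)) ->
  tnorm (T - A) <= 2 * tnorm (T - T') + tnorm (T - rank1 s xs).
Proof.
move=> [_ A_best] xs_sphere.
have := ler_tnorm_distD T T' A; have := A_best s xs xs_sphere.
have := ler_tnorm_distD T' T (rank1 s xs); rewrite (tnorm_distC T' T); lra.
Qed.

Theorem proposition3p5 (R : realType) (n d : nat) (hn : (2 <= n)%N) (hd : (3 <= d)%N)
  (P : {mpoly R[#|{: d.-tuple 'I_n}|]} -> Prop) :
  (* Psi := zero_locus_sym P is a proper subvariety of Sym(n,d) *)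
  (exists T : tensor R n d, is_symtensor T /\ ~ zero_locus_sym P T) ->
  (forall T : tensor R n d, is_symtensor T -> ~ zero_locus_sym P T ->
     exists A : tensor R n d,
       (best_rank1_approx T A /\ forall B, best_rank1_approx T B -> B = A) /\
       is_symtensor A) ->
  forall T : tensor R n d, is_symtensor T ->
    exists A : tensor R n d, best_rank1_approx T A /\ is_symtensor A.
Proof.
move=> [T0 [T0_sym T0_notin]] generic_sym T T_sym.
have d_gt0 : (0 < d)%N by apply: leq_trans hd.
have [b [u [u_sphere u_best]]] := exists_best_tpow T (ltnW hn).
exists (tpow d b u); split; last exact: tpow_sym.
split; first by exists b, [tuple of nseq d u]; split => // j; rewrite tnth_nseq.
move=> s xs xs_sphere; apply/ler_addgt0Pr => e e_gt0.
have [T' [T'_sym T'_notin TT'_lt]] :=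
  sym_not_zero_locus_dense T0_sym T0_notin T_sym _ (divr_gt0 e_gt0 (ltr0n R 2)).
have [A [[A_best _] A_sym]] := generic_sym T' T'_sym T'_notin.
have [[a [us [us_sphere A_rank1]]] _] := A_best.
rewrite A_rank1 in A_sym.
have [b' A_tpow] := sym_rank1_eq_tpow (Ordinal d_gt0) us_sphere A_sym.
have := u_best b' _ (us_sphere (Ordinal d_gt0)); rewrite -A_tpow -A_rank1.
have := best_rank1_approx_perturb T s A_best xs_sphere; lra.
Qed.
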